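(* For a point $(u,v)\in\mathbb{C}^2$, the following are equivalent: (1) $(u,v)\in\mathcal{D}_1$; (2) $|1+u^2-v^2|<1+|u|^2-|v|^2$ and $0<\mathrm{Im}(u(1+\overline{v}))$; (3) the roots of the equation $(u+i)z^2+2vz+(u-i)=0$ lie in $\mathbb{D}$; (4) $|\mathrm{Im}(v)+i\,\mathrm{Im}(\overline{u}v)|<\mathrm{Im}(u)$; (5) $|v|<|u+i|$ and $|\mathrm{Im}(v)+i\,\mathrm{Im}(\overline{u}v)|<\mathrm{Im}(u)$; (6) $\left|\frac{\alpha(u-i)+v}{u+i+\alpha v}\right|<1$ for every $\alpha\in\overline{\mathbb{D}}$; (7) $\left|\frac{u-i+\overline{\alpha}v}{u+i+\alpha v}\right|<1$ for every $\alpha\in\overline{\mathbb{D}}$; (8) $2|\mathrm{Im}(v)+i\,\mathrm{Im}(\overline{u}v)|+|1+u^2-v^2|<|i+u|^2-|v|^2$; (9) $\mathrm{Im}(u)>0$ and there is $\beta=\beta_1+i\beta_2\in\mathbb{D}$ ($\beta_1,\beta_2\in\mathbb{R}$) such that $v+\beta_1u+\beta_2=0$.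
   Context: $\mathbb{D}$ is the open unit disc and $\overline{\mathbb{D}}$ the closed unit disc in $\mathbb{C}$. $\mathcal{D}_1=\{(z_1,z_2)\in\mathbb{C}^2: 1+|z_1|^2-|z_2|^2>|1+z_1^2-z_2^2|,\ \mathrm{Im}(z_1(1+\overline{z_2}))>0\}$. *)

(* We use the generic numClosedField notations
   'i, 'Re, 'Im, ^* (conjugation) and `|_| (modulus, as a real element of C). *)
From mathcomp Require Import all_boot all_order all_algebra complex.
From mathcomp Require Import reals.
Set Implicit Arguments. Unset Strict Implicit. Unset Printing Implicit Defensive.
Import Order.TTheory GRing.Theory Num.Theory.
Local Open Scope ring_scope.

Definition D1 (R : realType) : {pred R[i] * R[i]} :=
  [pred z | (`|1 + z.1 ^+ 2 - z.2 ^+ 2| < 1 + `|z.1| ^+ 2 - `|z.2| ^+ 2)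
            && (0 < 'Im (z.1 * (1 + z.2^*)))].

Definition open_disc (R : realType) : {pred R[i]} := [pred z | `|z| < 1].
Definition closed_disc (R : realType) : {pred R[i]} := [pred z | `|z| <= 1].
Arguments D1 : clear implicits.
Arguments open_disc : clear implicits.
Arguments closed_disc : clear implicits.

(* Write u = a + ib, v = c + id and w = Im v + i Im (conj u v) = d + i (ad - bc).
   Every condition is shown equivalent to the pivot condition (4), |w| < Im u,
   which in coordinates reads sqrt (d^2 + (ad - bc)^2) < b.  The reductions rest
   on the identities
     (1 + |u|^2 - |v|^2)^2 - |1 + u^2 - v^2|^2 = 4 ((Im u)^2 - |w|^2),
     |u + i + alpha v|^2 - |u - i + conj alpha v|^2 = 4 (Im u + Re (alpha w)),
     |u + i + alpha v|^2 - |alpha (u - i) + v|^2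
       = (|u + i|^2 - |v|^2) (1 - |alpha|^2) + 4 |alpha|^2 Im u + 4 Re (alpha w),
   on the fact that Re (alpha w) has minimum -|w| on the closed unit disc, and,
   for (3), on the Schur-Cohn criterion: both roots of a z^2 + b z + c lie in the
   unit disc iff |conj a b - c conj b| < |a|^2 - |c|^2, which for a = u + i,
   b = 2 v, c = u - i reads 4 |w| < 4 Im u.  In (9) the witness is
   beta = (- d + i (ad - bc)) / b, of modulus |w| / Im u. *)

From mathcomp Require Import all_boot all_order all_algebra complex.
From mathcomp Require Import reals.
From mathcomp Require Import ring lra.
Import Order.TTheory GRing.Theory Num.Theory.
Local Open Scope ring_scope.

Lemma cauchy_schwarz2 {R : realDomainType} (p q x y : R) :
  (p * x - q * y) ^+ 2 <= (p ^+ 2 + q ^+ 2) * (x ^+ 2 + y ^+ 2).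
Proof.
rewrite -subr_ge0 (_ : _ - _ = (p * y + q * x) ^+ 2) ?sqr_ge0 //; ring.
Qed.

Lemma lt1_of_mul_lt1 {R : numDomainType} {x y : R} : 0 <= x -> 0 <= y ->
  x * y < 1 -> 0 < (1 - x) * (1 - y) -> x < 1 /\ y < 1.
Proof.
move=> x0 y0 xy1 pos.
have [x1|x1|x1] := real_ltgtP (ger0_real x0) (real1 R).
- by split=> //; move: pos; rewrite pmulr_rgt0 ?subr_gt0.
- have y1 : 1 < y by move: pos; rewrite nmulr_rgt0 ?subr_lt0.
  by have := lt_trans xy1 (mulr_egt1 x1 y1); rewrite ltxx.
- by move: pos; rewrite x1 subrr mul0r ltxx.
Qed.

Lemma norm_div_lt1P {F : numFieldType} (x y : F) :
  (y != 0 /\ `|x / y| < 1) <-> `|x| < `|y|.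
Proof.
split=> [[y0]|xy]; first by rewrite normf_div ltr_pdivrMr ?normr_gt0 // mul1r.
have y0 : y != 0 by rewrite -normr_gt0 (le_lt_trans (normr_ge0 x)).
by rewrite normf_div ltr_pdivrMr ?normr_gt0 // mul1r.
Qed.

Section PlaneNorm.
Context {R : rcfType}.
Implicit Types b d e p q x y : R.

Lemma sum_sqr_ge0 x y : 0 <= x ^+ 2 + y ^+ 2.
Proof. by rewrite addr_ge0 ?sqr_ge0. Qed.

Lemma sqrtr_lt x y : 0 <= x -> (Num.sqrt x < y) = (0 < y) && (x < y ^+ 2).
Proof.
move=> x0; have [y0|y0] := ltrP 0 y; last first.
  by apply/negbTE; rewrite -leNgt (le_trans y0) ?sqrtr_ge0.
by rewrite -ltr_sqr ?nnegrE ?sqrtr_ge0 ?ltW // sqr_sqrtr.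
Qed.

Lemma sqrtr_lt1 x : 0 <= x -> (Num.sqrt x < 1) = (x < 1).
Proof. by move=> x0; rewrite sqrtr_lt // ltr01 expr1n. Qed.

Lemma sqrtr_le1 x : (Num.sqrt x <= 1) = (x <= 1).
Proof. by rewrite -{1}sqrtr1 ler_sqrt. Qed.

Lemma dot_ge_neg_norms p q d e :
  - (Num.sqrt (p ^+ 2 + q ^+ 2) * Num.sqrt (d ^+ 2 + e ^+ 2)) <= p * d - q * e.
Proof.
have : `|p * d - q * e| <= Num.sqrt (p ^+ 2 + q ^+ 2) * Num.sqrt (d ^+ 2 + e ^+ 2).
  by rewrite -sqrtrM ?sum_sqr_ge0 // -sqrtr_sqr ler_wsqrtr ?cauchy_schwarz2.
by rewrite ler_norml => /andP[].
Qed.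

Lemma circle_dot_gt0 b d e :
  (forall p q, p ^+ 2 + q ^+ 2 = 1 -> 0 < b + (p * d - q * e)) ->
  Num.sqrt (d ^+ 2 + e ^+ 2) < b.
Proof.
set t := Num.sqrt _ => pos.
have [->|tn0] := eqVneq t 0.
  have := pos 1 0; have := pos (-1) 0.
  rewrite sqrrN expr1n expr0n addr0 => /(_ erefl) ? /(_ erefl); lra.
have t2 : t ^+ 2 = d ^+ 2 + e ^+ 2 by rewrite sqr_sqrtr ?sum_sqr_ge0.
have /pos : (- d / t) ^+ 2 + (e / t) ^+ 2 = 1.
  by rewrite !expr_div_n sqrrN -mulrDl -t2 divff ?expf_neq0.
rewrite (_ : _ - _ = - (t ^+ 2 / t)); last by rewrite t2; field.
rewrite expr2 mulfK //; lra.
Qed.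

Lemma disc_dot_gt0P b d e :
  (forall p q, p ^+ 2 + q ^+ 2 <= 1 -> 0 < b + (p * d - q * e)) <->
  Num.sqrt (d ^+ 2 + e ^+ 2) < b.
Proof.
split=> [pos|tb p q pq1].
  by apply: circle_dot_gt0 => p q pq1; apply: pos; rewrite pq1.
have r1 : Num.sqrt (p ^+ 2 + q ^+ 2) <= 1 by rewrite sqrtr_le1.
have := dot_ge_neg_norms p q d e.
have : Num.sqrt (p ^+ 2 + q ^+ 2) * Num.sqrt (d ^+ 2 + e ^+ 2)
       <= Num.sqrt (d ^+ 2 + e ^+ 2) by rewrite ler_piMl ?sqrtr_ge0.
lra.
Qed.

End PlaneNorm.

Section SchurCohn.
Variable C : numClosedFieldType.
Implicit Types a b c w z : C.

Lemma quadratic_root_exists a b c : a != 0 -> exists z, a * z ^+ 2 + b * z + c = 0.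
Proof.
move=> a0; set s := sqrtC (b ^+ 2 - 4 * a * c).
exists ((s - b) / (2 * a)); set z := _ / _.
have : 4 * a * (a * z ^+ 2 + b * z + c) = 0.
  rewrite (_ : 4 * a * _ = (2 * a * z + b) ^+ 2 - (b ^+ 2 - 4 * a * c)); last by ring.
  by rewrite (_ : 2 * a * z + b = s) ?sqrtCK ?subrr // /z; field.
by move/eqP; rewrite !mulf_eq0 (negbTE a0) pnatr_eq0 orbF => /eqP.
Qed.

Lemma quadratic_vieta {a b c z} : a != 0 -> a * z ^+ 2 + b * z + c = 0 ->
  b = - (a * (z + (- b / a - z))) /\ c = a * (z * (- b / a - z)).
Proof.
move=> a0 root; split; first by field.
by rewrite -[LHS]subr0 -root; field.
Qed.

Lemma schur_cohn_identities a z w :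
  let b := - (a * (z + w)) in let c := a * (z * w) in
  `|a| ^+ 2 - `|c| ^+ 2 = `|a| ^+ 2 * (1 - `|z| ^+ 2 * `|w| ^+ 2) /\
  (`|a| ^+ 2 - `|c| ^+ 2) ^+ 2 - `|a^* * b - c * b^*| ^+ 2
    = (`|a| ^+ 2) ^+ 2 * ((1 - `|z| ^+ 2) * (1 - `|w| ^+ 2)) * `|1 - z^* * w| ^+ 2.
Proof.
rewrite /= !normCK !(rmorphM, rmorphB, rmorphN, rmorphD, rmorph1) /= !conjCK.
by split; ring.
Qed.

Lemma schur_cohn_rootsP {a b c z w} : a != 0 ->
  b = - (a * (z + w)) -> c = a * (z * w) ->
  (`|z| < 1 /\ `|w| < 1) <-> `|a^* * b - c * b^*| < `|a| ^+ 2 - `|c| ^+ 2.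
Proof.
move=> a0 -> ->; have [-> E] := schur_cohn_identities a z w; move: E.
set D := `|_ - _|; set M := `|a| ^+ 2; set X := `|z| ^+ 2; set Y := `|w| ^+ 2.
set G := `|1 - _| ^+ 2 => E.
have M0 : 0 < M by rewrite exprn_gt0 ?normr_gt0.
have [X0 Y0 D0] : [/\ 0 <= X, 0 <= Y & 0 <= D] by split; rewrite ?exprn_ge0 ?normr_ge0.
have [M2 G0] : 0 < M ^+ 2 /\ 0 <= G by rewrite exprn_gt0 // exprn_ge0 ?normr_ge0.
split=> [[z1 w1]|DK].
  have [X1 Y1] : X < 1 /\ Y < 1 by rewrite !expr_lt1.
  have K0 : 0 < M * (1 - X * Y) by rewrite pmulr_rgt0 // subr_gt0 mulr_ilt1.
  rewrite -(ltr_sqr D0 (ltW K0)) -subr_gt0 E.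
  apply: mulr_gt0; first by rewrite mulr_gt0 // mulr_gt0 // subr_gt0.
  rewrite exprn_gt0 // normr_gt0 subr_eq0; apply/eqP => zw1.
  have := mulr_ilt1 (normr_ge0 z) (normr_ge0 w) z1 w1.
  by rewrite -norm_conjC -normrM -zw1 normr1 ltxx.
have K0 : 0 < M * (1 - X * Y) := le_lt_trans D0 DK.
have XY1 : X * Y < 1 by move: K0; rewrite pmulr_rgt0 // subr_gt0.
move: DK; rewrite -(ltr_sqr D0 (ltW K0)) -subr_gt0 E -mulrA pmulr_rgt0 //.
have [->|Gn0] := eqVneq G 0; first by rewrite mulr0 ltxx.
rewrite pmulr_lgt0 => [/(lt1_of_mul_lt1 X0 Y0 XY1)|]; last by rewrite lt0r Gn0.
by rewrite !expr_lt1.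
Qed.

Lemma quadratic_roots_in_unit_discP a b c : a != 0 ->
  (forall z, a * z ^+ 2 + b * z + c = 0 -> `|z| < 1) <->
  `|a^* * b - c * b^*| < `|a| ^+ 2 - `|c| ^+ 2.
Proof.
move=> a0; split=> [roots|crit z root].
  have [z root] := quadratic_root_exists a b c a0.
  have [eb ec] := quadratic_vieta a0 root.
  apply/(schur_cohn_rootsP a0 eb ec); split; apply: roots => //.
  by rewrite -root; field.
have [eb ec] := quadratic_vieta a0 root.
by have [] := (schur_cohn_rootsP a0 eb ec).2 crit.
Qed.

Lemma sqr_norm_add_i_sub (u : C) : `|u + 'i| ^+ 2 - `|u - 'i| ^+ 2 = 4 * 'Im u.
Proof. by rewrite !normCK ImE !rmorphD rmorphN /= conjCi; field. Qed.

Lemma schur_cohn_cross_term (u v : C) :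
  (u + 'i)^* * (2 * v) - (u - 'i) * (2 * v)^* = 4 * ('Im v + 'i * 'Im (u^* * v)).
Proof.
rewrite !ImE !(rmorphM, rmorphD, rmorphB, rmorph1) /= conjCK conjCi.
apply/eqP; rewrite -subr_eq0.
rewrite (_ : _ - _ = 2 * (u^* * v - u * v^*) * (1 + 'i ^+ 2)); last by field.
by rewrite sqrCi subrr mulr0.
Qed.

Lemma roots_in_unit_discP (u v : C) :
  (u + 'i != 0 /\
   forall z, (u + 'i) * z ^+ 2 + 2 * v * z + (u - 'i) = 0 -> `|z| < 1) <->
  `|'Im v + 'i * 'Im (u^* * v)| < 'Im u.
Proof.
have [ui0|ui0] := eqVneq (u + 'i) 0.
  have -> : u = - 'i by apply/eqP; rewrite -subr_eq0 opprK ui0.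
  have -> : 'Im (- 'i) = -1 :> C by rewrite raddfN /= Im_i.
  split=> [[]|/(le_lt_trans (normr_ge0 _))] //.
  by rewrite ltr0N1.
rewrite -(ltr_pM2l (_ : 0 < 4)) ?ltr0n // -sqr_norm_add_i_sub.
rewrite -[4]ger0_norm ?ler0n // -normrM -schur_cohn_cross_term.
by rewrite -quadratic_roots_in_unit_discP //; split=> [[]|].
Qed.

End SchurCohn.

Section Coordinates.
Variable R : rcfType.
Variables a b c d : R.

(* For u = a + ib and v = c + id: e = Im (conj u v), t = |w|,
   N = 1 + |u|^2 - |v|^2 and S = |1 + u^2 - v^2|. *)
Local Notation e := (a * d - b * c).
Local Notation t := (Num.sqrt (d ^+ 2 + e ^+ 2)).
Local Notation N := (1 + (a ^+ 2 + b ^+ 2) - (c ^+ 2 + d ^+ 2)).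
Local Notation S := (Num.sqrt ((1 + (a ^+ 2 - b ^+ 2) - (c ^+ 2 - d ^+ 2)) ^+ 2
                               + (2 * (a * b - c * d)) ^+ 2)).

Lemma sqr_t : t ^+ 2 = d ^+ 2 + e ^+ 2.
Proof. by rewrite sqr_sqrtr ?sum_sqr_ge0. Qed.

Lemma sqr_N_sub_sqr_S : N ^+ 2 - S ^+ 2 = 4 * (b ^+ 2 - t ^+ 2).
Proof. rewrite sqr_t sqr_sqrtr ?sum_sqr_ge0 //; ring. Qed.

Lemma pivotE : (t < b) = (0 < b) && (d ^+ 2 + e ^+ 2 < b ^+ 2).
Proof. by rewrite sqrtr_lt ?sum_sqr_ge0. Qed.

Lemma pivot_sqr_c : t < b -> c ^+ 2 < 1 + a ^+ 2.
Proof.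
rewrite pivotE => /andP[b0 de_b].
have cs := cauchy_schwarz2 a 1 d e.
rewrite (_ : a * d - 1 * e = b * c) in cs; last by ring.
have : (b * c) ^+ 2 < (1 + a ^+ 2) * b ^+ 2.
  apply: le_lt_trans cs _; rewrite expr1n addrC ltr_pM2l //.
  by rewrite ltr_pwDl ?sqr_ge0.
by rewrite exprMn mulrC ltr_pM2r ?exprn_gt0.
Qed.

(* The second bound holds because N^2 = S^2 + 4 (b - t) (b + t) >= (2 (b - t))^2. *)
Lemma pivot_N : t < b -> 0 < N /\ 2 * (b - t) <= N.
Proof.
move=> tb; have := tb; rewrite pivotE => /andP[b0 de_b].
have c2 := pivot_sqr_c tb.
have N0 : 0 < N by have := sqr_ge0 e; lra.
have Nb : 0 <= 2 * (b - t) by rewrite mulr_ge0 // subr_ge0 ltW.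
split=> //; rewrite -ler_sqr ?nnegrE ?(ltW N0) //.
have := sqr_N_sub_sqr_S; have := sqr_ge0 S; have := sqrtr_ge0 (d ^+ 2 + e ^+ 2).
nra.
Qed.

Lemma D1_coordP : (S < N /\ 0 < b - e) <-> t < b.
Proof.
have t0 := sqrtr_ge0 (d ^+ 2 + e ^+ 2); have S0 : 0 <= S by exact: sqrtr_ge0.
have e2 : e ^+ 2 <= t ^+ 2 by rewrite sqr_t lerDr sqr_ge0.
have NS := sqr_N_sub_sqr_S.
split=> [[SN eb]|tb].
  have tb2 : t ^+ 2 < b ^+ 2.
    suff : S ^+ 2 < N ^+ 2 by lra.
    by rewrite ltr_sqr ?nnegrE // ltW // (le_lt_trans S0).
  suff b0 : 0 < b by rewrite -(ltr_sqr t0 (ltW b0)).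
  by rewrite ltNge; apply/negP => b0; nra.
have [N0 _] := pivot_N tb.
have b0 : 0 < b := le_lt_trans t0 tb.
have tb2 : t ^+ 2 < b ^+ 2 by rewrite (ltr_sqr t0 (ltW b0)).
split; first by rewrite -(ltr_sqr S0 (ltW N0)); lra.
suff : `|e| < b by rewrite ltr_norml => /andP[_]; lra.
by rewrite -(ltr_sqr (normr_ge0 e) (ltW b0)) real_normK ?num_real; lra.
Qed.

Lemma pivot_norm_v_lt : t < b -> c ^+ 2 + d ^+ 2 < a ^+ 2 + (b + 1) ^+ 2.
Proof.
move=> tb; have c2 := pivot_sqr_c tb.
move: tb; rewrite pivotE => /andP[b0 de_b].
have := sqr_ge0 e; nra.
Qed.

Lemma double_bound_coordP :
  2 * t + S < a ^+ 2 + (1 + b) ^+ 2 - (c ^+ 2 + d ^+ 2) <-> t < b.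
Proof.
have t0 := sqrtr_ge0 (d ^+ 2 + e ^+ 2); have S0 : 0 <= S by exact: sqrtr_ge0.
have NS := sqr_N_sub_sqr_S.
rewrite (_ : a ^+ 2 + _ - _ = N + 2 * b); last by ring.
split=> [h|tb].
  have N2b : 0 < N + 2 * b by lra.
  have : S ^+ 2 < (N + 2 * b - 2 * t) ^+ 2 by rewrite ltr_sqr ?nnegrE //; lra.
  nra.
have [N0 Nbt] := pivot_N tb.
suff : S < N + 2 * (b - t) by lra.
rewrite -ltr_sqr ?nnegrE //; first nra.
lra.
Qed.

Lemma linear_relation_coordP :
  (0 < b /\ exists p q, p ^+ 2 + q ^+ 2 < 1 /\ c + p * a + q = 0 /\ d + p * b = 0)
  <-> t < b.
Proof.
rewrite pivotE; split=> [[b0 [p [q [pq1 [hc hd]]]]]|/andP[b0 de_b]].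
  have -> : d ^+ 2 + e ^+ 2 = b ^+ 2 * (p ^+ 2 + q ^+ 2).
    rewrite (_ : d = - (p * b)); last by lra.
    rewrite (_ : c = - (p * a) - q); last by lra.
    ring.
  by rewrite b0 /= gtr_pMr ?exprn_gt0.
split=> //; exists (- d / b), (e / b); split; last by split; field; lra.
by rewrite !expr_div_n sqrrN -mulrDl ltr_pdivrMr ?exprn_gt0 // mul1r.
Qed.

(* |u + i + alpha v|^2 - |alpha (u - i) + v|^2 and
   |u + i + alpha v|^2 - |u - i + conj alpha v|^2 for alpha = p + iq. *)
Lemma mobius_identity p q :
  (a + (p * c - q * d)) ^+ 2 + (b + 1 + (p * d + q * c)) ^+ 2
  - ((p * a - q * (b - 1) + c) ^+ 2 + (p * (b - 1) + q * a + d) ^+ 2)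
  = (a ^+ 2 + (b + 1) ^+ 2 - (c ^+ 2 + d ^+ 2)) * (1 - (p ^+ 2 + q ^+ 2))
    + 4 * (p ^+ 2 + q ^+ 2) * b + 4 * (p * d - q * e).
Proof. ring. Qed.

Lemma mobius_conj_identity p q :
  (a + (p * c - q * d)) ^+ 2 + (b + 1 + (p * d + q * c)) ^+ 2
  - ((a + (p * c + q * d)) ^+ 2 + (b - 1 + (p * d - q * c)) ^+ 2)
  = 4 * (b + (p * d - q * e)).
Proof. ring. Qed.

Lemma mobius_coordP :
  (forall p q, p ^+ 2 + q ^+ 2 <= 1 ->
     0 < (a ^+ 2 + (b + 1) ^+ 2 - (c ^+ 2 + d ^+ 2)) * (1 - (p ^+ 2 + q ^+ 2))
         + 4 * (p ^+ 2 + q ^+ 2) * b + 4 * (p * d - q * e))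
  <-> t < b.
Proof.
split=> [pos|tb p q pq1].
  apply: circle_dot_gt0 => p q pq1.
  by have := pos p q; rewrite pq1 lexx => /(_ isT); lra.
have [N0 Nbt] := pivot_N tb.
have := dot_ge_neg_norms p q d e.
set r := Num.sqrt (p ^+ 2 + q ^+ 2).
have r0 : 0 <= r by exact: sqrtr_ge0.
have r1 : r <= 1 by rewrite sqrtr_le1.
have <- : r ^+ 2 = p ^+ 2 + q ^+ 2 by rewrite sqr_sqrtr ?sum_sqr_ge0.
have t0 := sqrtr_ge0 (d ^+ 2 + e ^+ 2).
have : 0 <= t * (1 - r) ^+ 2 by rewrite mulr_ge0 ?sqr_ge0.
have : 0 <= (N - 2 * (b - t)) * (1 - r ^+ 2).
  by rewrite mulr_ge0 // subr_ge0 ?expr_le1.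
rewrite (_ : a ^+ 2 + _ - _ = N + 2 * b); last by ring.
nra.
Qed.

End Coordinates.

Section ComplexCoordinates.
Variable R : rcfType.
Implicit Types a b c d p q x y : R.
Local Open Scope complex_scope.

(* On R[i] the conjugation and 'i of numClosedFieldType are those of complex.v,
   which simpc computes with. *)
Lemma Num_conjE (z : R[i]) : z^*%R = z^*. Proof. by []. Qed.
Lemma Num_iE : 'i%R = 'i :> R[i]. Proof. by []. Qed.
Lemma one_coord : 1 = 1 +i* 0 :> R[i]. Proof. by []. Qed.

Lemma Re_coord a b : 'Re (a +i* b) = a%:C. Proof. by rewrite -complexRe. Qed.
Lemma Im_coord a b : 'Im (a +i* b) = b%:C. Proof. by rewrite -complexIm. Qed.

Lemma normc_coord a b : `|a +i* b| = (Num.sqrt (a ^+ 2 + b ^+ 2))%:C.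
Proof. exact: normc_def. Qed.

Lemma sqr_normc_coord a b : `|a +i* b| ^+ 2 = (a ^+ 2 + b ^+ 2)%:C.
Proof. by rewrite -add_Re2_Im2. Qed.

Lemma normc_lt_coord x y x' y' :
  (`|x +i* y| < `|x' +i* y'|) = (x ^+ 2 + y ^+ 2 < x' ^+ 2 + y' ^+ 2).
Proof. by rewrite -ltr_sqr ?nnegrE ?normr_ge0 // !sqr_normc_coord ltcR. Qed.

Lemma w_coord a b c d :
  'Im (c +i* d) + 'i%R * 'Im ((a +i* b)^*%R * (c +i* d)) = d +i* (a * d - b * c).
Proof. by rewrite Num_conjE Num_iE; simpc; rewrite !Im_coord; simpc. Qed.

Lemma pivot_coord a b c d :
  (`|'Im (c +i* d) + 'i%R * 'Im ((a +i* b)^*%R * (c +i* d))| < 'Im (a +i* b))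
  = (Num.sqrt (d ^+ 2 + (a * d - b * c) ^+ 2) < b).
Proof. by rewrite w_coord normc_coord Im_coord ltcR. Qed.

Lemma sqr_sub_sqr_coord a b c d :
  1 + (a +i* b) ^+ 2 - (c +i* d) ^+ 2
  = (1 + (a ^+ 2 - b ^+ 2) - (c ^+ 2 - d ^+ 2)) +i* (2 * (a * b - c * d)).
Proof. by rewrite !expr2 one_coord; simpc; congr (_ +i* _); ring. Qed.

Lemma Im_mul_conj_coord a b c d :
  'Im ((a +i* b) * (1 + (c +i* d)^*%R)) = (b - (a * d - b * c))%:C.
Proof.
by rewrite Num_conjE one_coord; simpc; rewrite Im_coord; congr (_%:C); ring.
Qed.

Lemma add_i_coord a b : (a +i* b) + 'i%R = a +i* (b + 1).
Proof. by rewrite Num_iE; simpc. Qed.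

Lemma i_add_coord a b : 'i%R + (a +i* b) = a +i* (1 + b).
Proof. by rewrite Num_iE; simpc. Qed.

Lemma mobius_num_coord a b c d p q :
  (p +i* q) * ((a +i* b) - 'i%R) + (c +i* d)
  = (p * a - q * (b - 1) + c) +i* (p * (b - 1) + q * a + d).
Proof. by rewrite Num_iE; simpc; congr (_ +i* _); ring. Qed.

Lemma mobius_den_coord a b c d p q :
  (a +i* b) + 'i%R + (p +i* q) * (c +i* d)
  = (a + (p * c - q * d)) +i* (b + 1 + (p * d + q * c)).
Proof. by rewrite Num_iE; simpc; congr (_ +i* _); ring. Qed.

Lemma mobius_conj_coord a b c d p q :
  (a +i* b) - 'i%R + (p +i* q)^*%R * (c +i* d)
  = (a + (p * c + q * d)) +i* (b - 1 + (p * d - q * c)).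
Proof. by rewrite Num_iE Num_conjE; simpc; congr (_ +i* _); ring. Qed.

Lemma linear_coord a b c d p q :
  ((c +i* d) + 'Re (p +i* q) * (a +i* b) + 'Im (p +i* q) = 0)
  <-> (c + p * a + q = 0 /\ d + p * b = 0).
Proof. by rewrite Re_coord Im_coord; simpc; split=> [[-> ->]|[-> ->]]. Qed.

End ComplexCoordinates.

Section Conditions.
Context {R : realType}.
Implicit Types (p q : R) (u v : R[i]).

Local Notation pivot u v := (`|'Im v + 'i * 'Im (u^* * v)| < 'Im u).

Lemma D1_coord a b c d :
  ((Complex a b, Complex c d) \in D1 R) =
  (Num.sqrt ((1 + (a ^+ 2 - b ^+ 2) - (c ^+ 2 - d ^+ 2)) ^+ 2
             + (2 * (a * b - c * d)) ^+ 2)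
     < 1 + (a ^+ 2 + b ^+ 2) - (c ^+ 2 + d ^+ 2)) && (0 < b - (a * d - b * c)).
Proof.
rewrite inE /= sqr_sub_sqr_coord Im_mul_conj_coord normc_coord !sqr_normc_coord.
by rewrite -(rmorph1 (real_complex R)) -rmorphD -rmorphB !ltcR.
Qed.

Lemma open_disc_coord p q : (Complex p q \in open_disc R) = (p ^+ 2 + q ^+ 2 < 1).
Proof.
by rewrite inE /= normc_coord -(rmorph1 (real_complex R)) ltcR sqrtr_lt1 ?sum_sqr_ge0.
Qed.

Lemma closed_disc_coord p q : (Complex p q \in closed_disc R) = (p ^+ 2 + q ^+ 2 <= 1).
Proof. by rewrite inE /= normc_coord -(rmorph1 (real_complex R)) lecR sqrtr_le1. Qed.

Lemma D1_pivotP u v : (u, v) \in D1 R <-> pivot u v.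
Proof.
by case: u v => a b [c d]; rewrite D1_coord pivot_coord -D1_coordP; split=> /andP.
Qed.

Lemma D1_ineq_pivotP u v :
  (`|1 + u ^+ 2 - v ^+ 2| < 1 + `|u| ^+ 2 - `|v| ^+ 2 /\ 0 < 'Im (u * (1 + v^*)))
  <-> pivot u v.
Proof. by rewrite -D1_pivotP inE; split=> /andP. Qed.

Lemma roots_in_open_disc_pivotP u v :
  (u + 'i != 0 /\
   forall z, (u + 'i) * z ^+ 2 + 2 * v * z + (u - 'i) = 0 -> z \in open_disc R)
  <-> pivot u v.
Proof.
by rewrite -roots_in_unit_discP; split=> -[ui0 h]; split=> // z /h; rewrite inE.
Qed.

Lemma norm_lt_norm_add_i_pivotP u v : (`|v| < `|u + 'i| /\ pivot u v) <-> pivot u v.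
Proof.
case: u v => a b [c d]; rewrite pivot_coord add_i_coord normc_lt_coord.
by split=> [[]//|tb]; split=> //; exact: pivot_norm_v_lt.
Qed.

Lemma mobius_pivotP u v :
  (forall alpha, alpha \in closed_disc R ->
     u + 'i + alpha * v != 0 /\ `|(alpha * (u - 'i) + v) / (u + 'i + alpha * v)| < 1)
  <-> pivot u v.
Proof.
case: u v => a b [c d]; rewrite pivot_coord -mobius_coordP.
split=> [h p q | h [p q]].
  rewrite -closed_disc_coord => /h /norm_div_lt1P.
  by rewrite mobius_num_coord mobius_den_coord normc_lt_coord -subr_gt0 mobius_identity.
rewrite closed_disc_coord => /h pos; apply/norm_div_lt1P.
by rewrite mobius_num_coord mobius_den_coord normc_lt_coord -subr_gt0 mobius_identity.
Qed.

Lemma mobius_conj_pivotP u v :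
  (forall alpha, alpha \in closed_disc R ->
     u + 'i + alpha * v != 0 /\ `|(u - 'i + alpha^* * v) / (u + 'i + alpha * v)| < 1)
  <-> pivot u v.
Proof.
case: u v => a b [c d]; rewrite pivot_coord -disc_dot_gt0P.
split=> [h p q | h [p q]].
  rewrite -closed_disc_coord => /h /norm_div_lt1P.
  rewrite mobius_conj_coord mobius_den_coord normc_lt_coord -subr_gt0.
  by rewrite mobius_conj_identity pmulr_rgt0.
rewrite closed_disc_coord => /h pos; apply/norm_div_lt1P.
rewrite mobius_conj_coord mobius_den_coord normc_lt_coord -subr_gt0.
by rewrite mobius_conj_identity pmulr_rgt0.
Qed.

Lemma double_bound_pivotP u v :
  2 * `|'Im v + 'i * 'Im (u^* * v)| + `|1 + u ^+ 2 - v ^+ 2|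
    < `|'i + u| ^+ 2 - `|v| ^+ 2 <-> pivot u v.
Proof.
case: u v => a b [c d]; rewrite pivot_coord -double_bound_coordP.
rewrite i_add_coord !sqr_normc_coord w_coord sqr_sub_sqr_coord !normc_coord.
by rewrite -(rmorph_nat (real_complex R)) -rmorphM -rmorphD -rmorphB ltcR.
Qed.

Lemma linear_relation_pivotP u v :
  (0 < 'Im u /\ exists beta, beta \in open_disc R /\ v + 'Re beta * u + 'Im beta = 0)
  <-> pivot u v.
Proof.
case: u v => a b [c d]; rewrite pivot_coord -linear_relation_coordP Im_coord ltcR.
split=> [[b0 [[p q]]]|[b0 [p [q pq]]]].
  by rewrite open_disc_coord linear_coord => pq; split=> //; exists p, q.
by split=> //; exists (Complex p q); rewrite open_disc_coord linear_coord.
Qed.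

End Conditions.

Theorem theorem4p4 (R : realType) (u v : R[i]) :
  [<->
   (* (1) *) (u, v) \in D1 R;
   (* (2) *) `|1 + u ^+ 2 - v ^+ 2| < 1 + `|u| ^+ 2 - `|v| ^+ 2
               /\ 0 < 'Im (u * (1 + v^*));
   (* (3) *) (u + 'i != 0) /\
             (forall z : R[i], (u + 'i) * z ^+ 2 + 2 * v * z + (u - 'i) = 0 ->
                               z \in open_disc R);
   (* (4) *) `|'Im v + 'i * 'Im (u^* * v)| < 'Im u;
   (* (5) *) `|v| < `|u + 'i| /\ `|'Im v + 'i * 'Im (u^* * v)| < 'Im u;
   (* (6) *) (forall alpha : R[i], alpha \in closed_disc R ->
                u + 'i + alpha * v != 0 /\
                `|(alpha * (u - 'i) + v) / (u + 'i + alpha * v)| < 1);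
   (* (7) *) (forall alpha : R[i], alpha \in closed_disc R ->
                u + 'i + alpha * v != 0 /\
                `|(u - 'i + alpha^* * v) / (u + 'i + alpha * v)| < 1);
   (* (8) *) 2 * `|'Im v + 'i * 'Im (u^* * v)| + `|1 + u ^+ 2 - v ^+ 2|
               < `|'i + u| ^+ 2 - `|v| ^+ 2;
   (* (9) *) 0 < 'Im u /\
             (exists beta : R[i], beta \in open_disc R /\
                v + 'Re beta * u + 'Im beta = 0)].
Proof.
have e1 := D1_pivotP u v; have e2 := D1_ineq_pivotP u v.
have e3 := roots_in_open_disc_pivotP u v.
have e5 := norm_lt_norm_add_i_pivotP u v.
have e6 := mobius_pivotP u v; have e7 := mobius_conj_pivotP u v.
have e8 := double_bound_pivotP u v; have e9 := linear_relation_pivotP u v.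
tfae=> [/e1/e2|/e2/e3|/e3|/e5|/e5/e6|/e6/e7|/e7/e8|/e8/e9|/e9/e1] //.
Qed.
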